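(* Let $t>0$ with $1/t$ a positive integer, let $n\ge 2t+\frac{9}{2t}+\frac92$, and let $s\ge 2$ be an integer such that $s/t$ is an integer and $n\ge s+\frac{s}{t}+1$. Then $$\lambda_1\big(D(K_1\vee(K_{n-1-\frac1t}+\tfrac1tK_1))\big)<\lambda_1\big(D(K_s\vee(K_{n-s-\frac st}+\tfrac stK_1))\big).$$
   Context: For a connected graph $G$, $D(G)$ is the distance matrix and $\lambda_1(D(G))$ its largest eigenvalue. $K_m$ is the complete graph, $+$ is disjoint union, $kK_1$ is $k$ isolated vertices, $\vee$ is the join (disjoint union plus all edges between the two parts). *)

From HB Require Import structures.
From mathcomp Require Import all_boot all_order all_algebra.
From mathcomp Require Import classical_sets reals.
Set Implicit Arguments. Unset Strict Implicit. Unset Printing Implicit Defensive.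
Import Order.TTheory GRing.Theory Num.Theory.
Local Open Scope ring_scope.

(* A simple graph on a finite vertex type T is an (irreflexive, symmetric)
   adjacency relation e : rel T. *)

Definition Kcomplete (m : nat) : rel 'I_m := fun x y => x != y.
Definition Kempty (k : nat) : rel 'I_k := fun _ _ => false.

Arguments Kcomplete m : clear implicits.
Arguments Kempty k : clear implicits.
Definition gunion (T1 T2 : finType) (e1 : rel T1) (e2 : rel T2) : rel (T1 + T2) :=
  fun u v => match u, v with
             | inl x, inl y => e1 x y
             | inr x, inr y => e2 x y
             | _, _ => false
             end.

Definition gjoin (T1 T2 : finType) (e1 : rel T1) (e2 : rel T2) : rel (T1 + T2) :=
  fun u v => match u, v with
             | inl x, inl y => e1 x y
             | inr x, inr y => e2 x y
             | _, _ => true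
             end.

Fixpoint walkk (T : finType) (e : rel T) (k : nat) (x y : T) : bool :=
  match k with
  | 0 => x == y
  | k'.+1 => [exists z, e x z && walkk e k' z y]
  end.

(* graph distance: least k with a walk of length k from x to y
   (for connected graphs such k < #|T| exists; otherwise the value is #|T|) *)
Definition gdist (T : finType) (e : rel T) (x y : T) : nat :=
  find (fun k => walkk e k x y) (iota 0 #|T|).

Definition distmx (R : nzRingType) (T : finType) (e : rel T) : 'M[R]_#|T| :=
  \matrix_(i, j) ((gdist e (enum_val i) (enum_val j))%:R : R).

Definition lambda1 (R : realType) (n : nat) (A : 'M[R]_n) : R :=
  sup [set a : R | eigenvalue A a].

Definition Gamb (a m b : nat) : rel ('I_a + ('I_m + 'I_b)) :=
  gjoin (Kcomplete a) (gunion (Kcomplete m) (Kempty b)).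
Arguments Gamb a m b : clear implicits.

From HB Require Import structures.
From mathcomp Require Import all_boot all_order all_algebra.
From mathcomp Require Import classical_sets reals.
From mathcomp Require Import polyrcf ring lra zify.
Set Implicit Arguments. Unset Strict Implicit. Unset Printing Implicit Defensive.
Import Order.TTheory GRing.Theory Num.Theory.
Local Open Scope ring_scope.

(* In K_a \/ (K_m + bK_1) any two vertices are at distance 0, 1 or 2, so the
   vectors that are constant on the three parts are invariant under the distance
   matrix D, which acts on them through a 3x3 quotient matrix with characteristic
   polynomial qchar a m b.  At a root x >= m + b the corresponding vector is
   positive, and a positive vector w with w D <= x w bounds every eigenvalue of
   the nonnegative matrix D by x; hence lambda1 D is that root.  With K = 1/t,
   the cubic of the second graph equals the cubic of the first one minus
   K (s - 1) qgap, and qgap > 0 beyond n, so the second cubic is negative at the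
   spectral radius of the first graph and positive at 2n. *)

Lemma sum_ord_neq (R : nzRingType) p (y : 'I_p) (F : 'I_p -> R) (c : R) :
  F y = 0 -> (forall x, x != y -> F x = c) -> \sum_x F x = (p%:R - 1) * c.
Proof.
move=> Fy0 Fc; rewrite (bigD1 y) //= Fy0 add0r (eq_bigr (fun _ => c)) //.
rewrite sumr_const cardC1 card_ord.
by case: p y {F Fy0 Fc} => [[]//|p y]; rewrite /= -natr1 addrK mulr_natl.
Qed.

Lemma nonneg_mx_eigenvalue_le (R : realFieldType) N (M : 'M[R]_N) (w : 'rV[R]_N) r a :
  (forall i j, 0 <= M i j) -> (forall i, 0 < w 0 i) ->
  (forall i, (w *m M) 0 i <= r * w 0 i) -> eigenvalue M a -> a <= r.
Proof.
move=> M_ge0 w_gt0 wM_le /eigenvalueP[v vM v_neq0].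
have [i0 vi0] : exists i0, v 0 i0 != 0.
  apply/existsP; apply: contraR v_neq0 => /existsPn v0.
  by apply/eqP/rowP => i; rewrite mxE; apply/eqP; rewrite -[_ == _]negbK v0.
(* Compare v with w at an index maximising |v_i| / w_i. *)
pose F i := `|v 0 i| / w 0 i.
have [i _ F_max] := @arg_maxP _ _ _ i0 xpredT F isT.
have vi_gt0 : 0 < `|v 0 i|.
  have : 0 < F i by apply: lt_le_trans (F_max i0 isT); rewrite divr_gt0 ?normr_gt0.
  by rewrite pmulr_lgt0 // invr_gt0.
have v_le j : `|v 0 j| <= F i * w 0 j by rewrite -ler_pdivrMr //; exact: F_max.
suff : `|a| * `|v 0 i| <= r * `|v 0 i|.
  by rewrite ler_pM2r //; apply: le_trans; apply: ler_norm.
have -> : `|a| * `|v 0 i| = `|(v *m M) 0 i| by rewrite vM mxE normrM.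
rewrite mxE; apply: le_trans (ler_norm_sum _ _ _) _.
apply: (@le_trans _ _ (F i * (w *m M) 0 i)).
  rewrite mxE mulr_sumr; apply: ler_sum => j _.
  by rewrite normrM (ger0_norm (M_ge0 j i)) mulrA ler_wpM2r.
have -> : r * `|v 0 i| = F i * (r * w 0 i) by rewrite mulrCA /F divfK // gt_eqF.
by rewrite ler_wpM2l ?wM_le // divr_ge0 // ltW.
Qed.

Lemma lambda1_eq_max (R : realType) N (M : 'M[R]_N) x : eigenvalue M x ->
  (forall e, eigenvalue M e -> e <= x) -> lambda1 M = x.
Proof.
move=> Mx x_max; apply/le_anti/andP; split; first by apply: ge_sup; [exists x|].
by apply: sup_upper_bound => //; split; [exists x | exists x].
Qed.

Lemma walkk1 (T : finType) (e : rel T) u v : walkk e 1 u v = e u v.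
Proof.
by apply/existsP/idP => [[z /andP[h /eqP <-]]|h] //; exists v; rewrite h eqxx.
Qed.

(* The characteristic polynomial of the quotient matrix
   [:: [:: a - 1; m; b]; [:: a; m - 1; 2 b]; [:: a; 2 m; 2 b - 2]]. *)
Definition qchar {R : nzRingType} (a m b x : R) : R :=
  x ^+ 3 - (a + m + 2 * b - 4) * x ^+ 2
  + (a * b - 3 * a - 2 * m * b - 3 * m - 4 * b + 5) * x
  + (a * m * b + a * b - 2 * a - 2 * m * b - 2 * m - 2 * b + 2).

Section JoinGraph.
Variables a m b : nat.
Local Notation V := ('I_a + ('I_m + 'I_b))%type.
Local Notation G := (Gamb a m b).

Definition Gamb_dist (u v : V) : nat := if u == v then 0 else if G u v then 1 else 2.

Hypothesis a_gt0 : (0 < a)%N.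
(* gdist only tries walk lengths below the number of vertices. *)
Hypothesis card_ge3 : (3 <= a + (m + b))%N.

Lemma gdist_Gamb u v : gdist G u v = Gamb_dist u v.
Proof.
move: card_ge3; rewrite /gdist /Gamb_dist !card_sum !card_ord.
case: (a + (m + b))%N => [|[|[|N]]] // _ /=; rewrite -[[exists z, _]]/(walkk G 1 u v) walkk1.
case: eqP => // /eqP uv; case: ifP => // euv.
suff -> : [exists z, G u z && walkk G 1 z v] by [].
apply/existsP; exists (inl (Ordinal a_gt0)); rewrite walkk1.
by move: uv euv; case: u => [x|x]; case: v => [y|y] //=; rewrite /Kcomplete => ->.
Qed.

Definition blockf {R : Type} (X Y Z : R) (u : V) : R :=
  match u with inl _ => X | inr (inl _) => Y | inr (inr _) => Z end.

Definition D_blockf {R : nzRingType} (X Y Z : R) (u : V) : R :=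
  match u with
  | inl _ => (a%:R - 1) * X + m%:R * Y + b%:R * Z
  | inr (inl _) => a%:R * X + (m%:R - 1) * Y + 2 * b%:R * Z
  | inr (inr _) => a%:R * X + 2 * m%:R * Y + (2 * b%:R - 2) * Z
  end.

Lemma sum_blockf_dist (R : comNzRingType) (X Y Z : R) (w : V) :
  \sum_u blockf X Y Z u * (Gamb_dist u w)%:R = D_blockf X Y Z w.
Proof.
rewrite big_sumType /= big_sumType /=.
case: w => [y|[y|y]]; rewrite /Gamb_dist /= !sumr_const !card_ord.
- rewrite (sum_ord_neq (y := y) (c := X)); first ring.
    by rewrite eqE /= eqxx mulr0.
  by move=> i ne; rewrite eqE /= (negbTE ne) /Kcomplete ne mulr1n mulr1.
- rewrite (sum_ord_neq (y := y) (c := Y)); first ring.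
    by rewrite eqE /= eqE /= eqxx mulr0.
  by move=> i ne; rewrite eqE /= eqE /= (negbTE ne) /Kcomplete ne mulr1n mulr1.
- rewrite (sum_ord_neq (y := y) (c := (Z * 2))); first ring.
    by rewrite eqE /= eqE /= eqxx mulr0.
  by move=> i ne; rewrite eqE /= eqE /= (negbTE ne).
Qed.

Definition blockv {R : nzRingType} (X Y Z : R) : 'rV[R]_#|{: V}| :=
  \row_i blockf X Y Z (enum_val i).

Lemma blockv_mul_distmx (R : comNzRingType) (X Y Z : R) j :
  (blockv X Y Z *m distmx R G) 0 j = D_blockf X Y Z (enum_val j).
Proof.
rewrite !mxE -sum_blockf_dist.
under eq_bigr => i _ do rewrite !mxE gdist_Gamb.
rewrite -(big_enum_val (fun u => blockf X Y Z u * (Gamb_dist u (enum_val j))%:R)).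
by apply: eq_bigl => u; rewrite inE.
Qed.

Section Perron.
Variable R : realType.
Implicit Type x : R.

(* The row (1, 1, 1) adj (x - Q) for the quotient matrix Q, lifted to the vertices. *)
Definition perronX x := (x + 1) * (x + 2) - b%:R * (x + m%:R + 1).
Definition perronY x := (x + 1) * (x + 2).
Definition perronZ x := (x + 1) * (x + m%:R + 1).
Definition perronv x := blockv (perronX x) (perronY x) (perronZ x).

Lemma perronv_mul_distmx x j :
  (perronv x *m distmx R G) 0 j = x * perronv x 0 j - qchar a%:R m%:R b%:R x.
Proof.
rewrite blockv_mul_distmx mxE.
by case: (enum_val j) => [y|[y|y]]; rewrite /= /qchar /perronX /perronY /perronZ; ring.
Qed.

Lemma perronv_gt0 x i : m%:R + b%:R <= x -> 0 < perronv x 0 i.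
Proof.
have m_ge0 : 0 <= m%:R :> R by []. have b_ge0 : 0 <= b%:R :> R by [].
move=> x_ge; rewrite mxE /perronX /perronY /perronZ.
by case: (enum_val i) => [y|[y|y]] /=; nra.
Qed.

Hypothesis m_gt0 : (0 < m)%N.

Lemma Gamb_eigenvalue x : 0 <= x -> qchar a%:R m%:R b%:R x = 0 ->
  eigenvalue (distmx R G) x.
Proof.
move=> x_ge0 qx0; apply/eigenvalueP; exists (perronv x).
  by apply/rowP => j; rewrite perronv_mul_distmx qx0 subr0 !mxE.
apply/eqP => /rowP /(_ (enum_rank (inr (inl (Ordinal m_gt0)) : V))).
by rewrite !mxE enum_rankK /= /perronY => /eqP; rewrite mulf_eq0 => /orP[] /eqP; lra.
Qed.

Lemma lambda1_Gamb x : m%:R + b%:R <= x -> qchar a%:R m%:R b%:R x = 0 ->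
  lambda1 (distmx R G) = x.
Proof.
move=> x_ge qx0; have x_ge0 : 0 <= x by apply: le_trans x_ge; rewrite addr_ge0.
apply: lambda1_eq_max; first exact: Gamb_eigenvalue.
move=> e; apply: (@nonneg_mx_eigenvalue_le _ _ _ (perronv x)).
- by move=> i j; rewrite mxE ler0n.
- by move=> i; apply: perronv_gt0.
- by move=> i; rewrite perronv_mul_distmx qx0 subr0.
Qed.
End Perron.

End JoinGraph.

Lemma qchar_ivt (R : rcfType) (a m b lo hi : R) : lo <= hi ->
  qchar a m b lo < 0 -> 0 < qchar a m b hi ->
  exists2 x, lo < x < hi & qchar a m b x = 0.
Proof.
move=> lo_le_hi q_lo q_hi.
pose p : {poly R} := 'X^3 - (a + m + 2 * b - 4)%:P * 'X^2
  + (a * b - 3 * a - 2 * m * b - 3 * m - 4 * b + 5)%:P * 'X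
  + (a * m * b + a * b - 2 * a - 2 * m * b - 2 * m - 2 * b + 2)%:P.
have pE x : p.[x] = qchar a m b x.
  by rewrite !(hornerD, hornerN, hornerCM, hornerXn, hornerX, hornerC).
have [x x_in /rootP] := @poly_ivtoo R p lo hi lo_le_hi ltac:(by rewrite !pE pmulr_llt0).
by rewrite pE; exists x; rewrite in_itv in x_in.
Qed.

Lemma qchar_twice_sum_gt0 (R : realFieldType) (a m b N : R) :
  0 <= a -> 0 <= m -> 0 <= b -> a + m + b = N -> 0 < qchar a m b (2 * N).
Proof.
move=> a_ge0 m_ge0 b_ge0 <-.
have -> : qchar a m b (2 * (a + m + b)) = 2 + a * (4 * a ^+ 2 + 12 * a * m + 10 * a * b
    + 10 * a + 12 * m ^+ 2 + 15 * m * b + 20 * m + 6 * b ^+ 2 + 19 * b + 8)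
    + m * (4 * m ^+ 2 + 4 * m * b + 10 * m + 16 * b + 8) + b * (8 * b + 8).
  by rewrite /qchar; ring.
by rewrite !ltr_wpDr ?mulr_ge0 //; nra.
Qed.

Section RootComparison.
Variables (R : realFieldType) (K N : R) (s : nat).
Local Notation S := (s%:R : R).

Lemma N_lower_bound : 1 <= K -> 4 + 9 * K ^+ 2 + 9 * K <= 2 * K * N -> 2 * K + 4 <= N.
Proof.
move=> K_ge1 N_large; rewrite leNgt; apply/negP => N_lt.
have : 2 * K * N < 2 * K * (2 * K + 4) by rewrite ltr_pM2l //; lra.
nra.
Qed.

Lemma qchar_lt0_at_N : 1 <= K -> 4 + 9 * K ^+ 2 + 9 * K <= 2 * K * N ->
  qchar 1 (N - 1 - K) K N < 0.
Proof.
move=> K_ge1 N_large; have N_ge9 : 9 <= N by nra.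
have -> : qchar 1 (N - 1 - K) K N =
  2 * K ^+ 2 * N + K ^+ 2 - 3 * K * N ^+ 2 + K * N + 2 * K + N ^+ 2 + 3 * N + 2.
  by rewrite /qchar; ring.
nra.
Qed.

Definition qgap x := x ^+ 2 + (2 * N - 2 * K * (S + 1) - 3 * S - 2) * x
  + K * (S ^+ 2 - S - 1) + S ^+ 2 - 2 * S - 2 - N * (S - 1).

Lemma qcharD_qgap x :
  qchar S (N - S - S * K) (S * K) x = qchar 1 (N - 1 - K) K x - K * (S - 1) * qgap x.
Proof. by rewrite /qchar /qgap; ring. Qed.

Lemma qgap_gt0 x : 1 <= K -> 4 + 9 * K ^+ 2 + 9 * K <= 2 * K * N ->
  (2 <= s)%N -> S * (K + 1) + 1 <= N -> N <= x -> 0 < qgap x.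
Proof.
move=> K_ge1 N_large s_ge2 sK_le N_le_x.
have N_ge := N_lower_bound K_ge1 N_large.
have S_ge2 : 2 <= S by rewrite (ler_nat R 2 s).
suff qgap_N : 0 < qgap N.
  have -> : qgap x = qgap N + (x - N) * (x + 3 * N - 2 * K * (S + 1) - 3 * S - 2).
    by rewrite /qgap; ring.
  have : 0 <= (x - N) * (x + 3 * N - 2 * K * (S + 1) - 3 * S - 2).
    by apply: mulr_ge0; nra.
  lra.
pose e := N - S * (K + 1) - 1.
have e_ge0 : 0 <= e by rewrite /e; lra.
have -> : qgap N = 3 * e ^+ 2 + e * (4 * K * S - 2 * K + 2 * S + 5)
    + K ^+ 2 * S * (S - 2) + K * S ^+ 2 - 3 * K - S.
  by rewrite /qgap /e; ring.
have [s2 | s_ge3] : s = 2%N \/ (3 <= s)%N by lia.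
  have e_ge1 : 1 <= e by rewrite /e s2; lra.
  rewrite s2; nra.
have S_ge3 : 3 <= S by rewrite (ler_nat R 3 s).
have : 0 <= e * (4 * K * S - 2 * K + 2 * S + 5) by apply: mulr_ge0 => //; nra.
have : 0 <= K ^+ 2 * S * (S - 2) by rewrite !mulr_ge0 ?sqr_ge0 //; lra.
have : 0 <= (K - 1) * (S ^+ 2 - 3) by apply: mulr_ge0; nra.
nra.
Qed.

End RootComparison.

Lemma qchar_roots_lt (R : realType) (K N : R) (s : nat) : 1 <= K ->
  4 + 9 * K ^+ 2 + 9 * K <= 2 * K * N -> (2 <= s)%N -> s%:R * (K + 1) + 1 <= N ->
  exists r1 r2, [/\ N < r1, r1 < r2, qchar 1 (N - 1 - K) K r1 = 0
                  & qchar s%:R (N - s%:R - s%:R * K) (s%:R * K) r2 = 0].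
Proof.
move=> K_ge1 N_large s_ge2 sK_le.
have N_ge := N_lower_bound K_ge1 N_large.
have S_ge2 : 2 <= s%:R :> R by rewrite (ler_nat R 2 s).
have [r1 /andP[N_lt_r1 r1_lt] q1_r1] : exists2 r1, N < r1 < 2 * N & qchar 1 (N - 1 - K) K r1 = 0.
  apply: qchar_ivt; [lra | exact: qchar_lt0_at_N |].
  by apply: qchar_twice_sum_gt0; rewrite //; lra.
have q2_r1 : qchar s%:R (N - s%:R - s%:R * K) (s%:R * K) r1 < 0.
  rewrite qcharD_qgap q1_r1 sub0r oppr_lt0 !mulr_gt0 //; first lra; first lra.
  by apply: qgap_gt0 => //; lra.
have [r2 /andP[r1_lt_r2 _] q2_r2] := qchar_ivt (ltW r1_lt) q2_r1
  ltac:(by apply: qchar_twice_sum_gt0; rewrite ?mulr_ge0 //; lra).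
by exists r1, r2.
Qed.

Theorem mainTheorem7 (R : realType) (t : R) (k j n s : nat)
  (ht : 0 < t) (hk0 : (0 < k)%N) (hk : t^-1 = k%:R)
  (hn : 2 * t + 9 / (2 * t) + 9 / 2 <= n%:R)
  (hs : (2 <= s)%N) (hj : s%:R / t = j%:R)
  (hns : (s + j + 1 <= n)%N) :
  lambda1 (distmx R (Gamb 1%N (n - 1 - k)%N k))
  < lambda1 (distmx R (Gamb s (n - s - j)%N j)).
Proof.
have j_sk : j = (s * k)%N by apply/eqP; rewrite -(eqr_nat R) natrM -hj -hk.
subst j; have K_ge1 : 1 <= k%:R :> R by rewrite ler1n.
have N_large : 4 + 9 * k%:R ^+ 2 + 9 * k%:R <= 2 * k%:R * n%:R :> R.
  have k_neq0 : k%:R != 0 :> R by rewrite pnatr_eq0 -lt0n.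
  rewrite -subr_ge0 (_ : _ - _ = 2 * k%:R * (n%:R - (2 * t + 9 / (2 * t) + 9 / 2))).
    by rewrite mulr_ge0 ?subr_ge0 // mulr_ge0.
  by rewrite -[t]invrK hk; field.
have sK_le : s%:R * (k%:R + 1) + 1 <= n%:R :> R.
  by move: hns; rewrite -(ler_nat R) !natrD natrM; lra.
have [r1 [r2 [N_lt_r1 r1_lt_r2 q1 q2]]] := qchar_roots_lt K_ge1 N_large hs sK_le.
have -> : lambda1 (distmx R (Gamb 1 (n - 1 - k) k)) = r1.
  apply: lambda1_Gamb; rewrite ?natrB //; try nia; lra.
have -> : lambda1 (distmx R (Gamb s (n - s - s * k) (s * k))) = r2.
  apply: lambda1_Gamb; rewrite ?natrB ?natrM //; try nia; have := ler0n R s; lra.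
exact: r1_lt_r2.
Qed.
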